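(* For any parameters $l_c>1$ and $r_c\in(0,1)$ let $(e^{2u(t)}(ds^2+d\theta^2))_{t\in[0,\infty)}$ be the corresponding cb-Ricci flow. Then \[ u(t,s) \ge -\log\cosh(s-s_b) + \tfrac12\log\bigl(2(1-t)\bigr) \] for all $(t,s)\in[0,1)\times\mathbb R$.
   Context: Setting (cb-surface): for a length $l_c>0$ and radius $r_c\in(0,1)$, the cb-surface is the rotationally symmetric plane $(\mathbb C,g_{\mathsf{cb}})$ with $g_{\mathsf{cb}}=e^{2u_{\mathsf{cb}}(s)}(ds^2+d\theta^2)$ in logarithmic cylindrical coordinates $z=e^{-s+s_e+i\theta}$, $(s,\theta)\in\mathbb R\times[0,2\pi)$, where $u_{\mathsf{cb}}(s)=-s+s_e$ for $s\le s_0$; $u_{\mathsf{cb}}(s)=-\log(r_c^{-1}\cos(r_cs+l_c))$ for $s\in(s_0,-l_c/r_c)$; $u_{\mathsf{cb}}(s)=\log r_c$ for $s\in[-l_c/r_c,0]$; $u_{\mathsf{cb}}(s)=-\log(r_c^{-1}\cos(r_cs))$ for $s\in(0,s_2]$; $u_{\mathsf{cb}}(s)=-\log\cosh(s-s_b)+\frac12\log2$ for $s>s_2$; with parameters $s_0\in(-(l_c+\pi/2)/r_c,-l_c/r_c)$, $s_e\in(s_0,-l_c/r_c)$, $s_2\in(0,\pi/(2r_c))$, $s_b>s_2$ chosen uniquely so that $u_{\mathsf{cb}}\in C^1(\mathbb R)$. The cb-Ricci flow is the Ricci flow $g(t)=e^{2u(t)}(ds^2+d\theta^2)$ on $\mathbb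 C$ with $g(0)=g_{\mathsf{cb}}$ which is instantaneously complete ($g(t)$ complete for $t>0$) and maximally stretched (for any Ricci flow $\tilde g(t)$ on $\mathbb C$, $t\in[0,\tilde T]$, with $\tilde g(0)\le g(0)$, one has $\tilde g(t)\le g(t)$), which exists and is unique for all time. *)

From Stdlib Require Import Reals Lra List.
From Coquelicot Require Import Coquelicot.
Open Scope R_scope.

Definition u_cb (l_c r_c s0 se s2 sb : R) (s : R) : R :=
  if Rle_dec s s0 then - s + se
  else if Rlt_dec s (- l_c / r_c) then - ln (/ r_c * cos (r_c * s + l_c))
  else if Rle_dec s 0 then ln r_c
  else if Rle_dec s s2 then - ln (/ r_c * cos (r_c * s))
  else - ln (cosh (s - sb)) + / 2 * ln 2.

(** Admissible parameters: the ranges of the paper plus u_cb in C^1(R)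
    (which determines s0, se, s2, sb uniquely). *)
Definition cb_params (l_c r_c s0 se s2 sb : R) : Prop :=
  0 < l_c /\ 0 < r_c < 1 /\
  - (l_c + PI / 2) / r_c < s0 < - l_c / r_c /\
  s0 < se < - l_c / r_c /\
  0 < s2 < PI / (2 * r_c) /\
  s2 < sb /\
  (forall s, ex_derive (u_cb l_c r_c s0 se s2 sb) s) /\
  (forall s, continuous (Derive (u_cb l_c r_c s0 se s2 sb)) s).

(** * Metrics on C = R^2 in conformal form  g = e^{2 v} (dx^2 + dy^2).
    A time-dependent metric is  v : R (time) -> R (x) -> R (y) -> R.
    Log-cylindrical coordinates z = e^{-s+se+i theta} give
    e^{2u}(ds^2+dtheta^2) = e^{2v}|dz|^2 with u = v + log|z| = v - s + se. *)

Definition pd (i : nat) (f : R -> R -> R -> R) : R -> R -> R -> R :=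
  match i with
  | O => fun t x y => Derive (fun a => f a x y) t
  | 1%nat => fun t x y => Derive (fun a => f t a y) x
  | _ => fun t x y => Derive (fun a => f t x a) y
  end.

Definition ex_pd (i : nat) (f : R -> R -> R -> R) (t x y : R) : Prop :=
  match i with
  | O => ex_derive (fun a => f a x y) t
  | 1%nat => ex_derive (fun a => f t a y) x
  | _ => ex_derive (fun a => f t x a) y
  end.

Definition iter_pd (l : list nat) (f : R -> R -> R -> R) : R -> R -> R -> R :=
  fold_right pd f l.

Definition cont_in (D : R -> R -> R -> Prop) (f : R -> R -> R -> R)
  (t x y : R) : Prop :=
  forall eps, 0 < eps -> exists del, 0 < del /\
    forall t' x' y', D t' x' y' -> Rabs (t' - t) < del -> Rabs (x' - x) < del ->
      Rabs (y' - y) < del -> Rabs (f t' x' y' - f t x y) < eps.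

Definition full (t x y : R) : Prop := True.

Definition smooth_on (D : R -> R -> R -> Prop) (f : R -> R -> R -> R) : Prop :=
  forall (l : list nat) (t x y : R), D t x y ->
    (forall i, ex_pd i (iter_pd l f) t x y) /\ cont_in full (iter_pd l f) t x y.

Definition open_slab (T : Rbar) (t x y : R) : Prop := 0 < t /\ Rbar_lt t T.
Definition closed_slab (T : Rbar) (t x y : R) : Prop := 0 <= t /\ Rbar_lt t T.

(** Ricci flow g(t) = e^{2v(t)}(dx^2+dy^2) on C, t in [0,T):
    smooth for t in (0,T), solving  d_t v = e^{-2v} (v_xx + v_yy)
    (i.e. d_t g = -2 K g), and attaining its initial metric
    g(0) = e^{2 v(0)} continuously (locally uniformly). *)
Definition ricci_flow (T : Rbar) (v : R -> R -> R -> R) : Prop :=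
  smooth_on (open_slab T) v /\
  (forall t x y, open_slab T t x y ->
     pd 0 v t x y = exp (- 2 * v t x y) *
       (pd 1%nat (pd 1%nat v) t x y + pd 2%nat (pd 2%nat v) t x y)) /\
  (forall t x y, closed_slab T t x y -> cont_in (closed_slab T) v t x y).

(** Completeness of the conformal metric e^{2w}(dx^2+dy^2) on R^2:
    metric balls about the origin are Euclidean-bounded (equivalent to
    completeness by Hopf-Rinow): any C^1 curve from 0 reaching Euclidean
    norm >= M has length >= L. *)
Definition complete_conformal (w : R -> R -> R) : Prop :=
  forall L : R, exists M : R, forall g1 g2 : R -> R,
    (forall a, ex_derive g1 a /\ ex_derive g2 a) ->
    (forall a, continuous (Derive g1) a /\ continuous (Derive g2) a) ->
    g1 0 = 0 -> g2 0 = 0 -> M <= sqrt (g1 1 ^ 2 + g2 1 ^ 2) ->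
    L <= RInt (fun a => exp (w (g1 a) (g2 a)) *
                        sqrt (Derive g1 a ^ 2 + Derive g2 a ^ 2)) 0 1.

(** The cb-Ricci flow: Ricci flow on C for t in [0,oo) with g(0) = g_cb
    (the identity holding on C minus the origin, hence everywhere by
    continuity), instantaneously complete and maximally stretched. *)
Definition cb_ricci_flow (l_c r_c s0 se s2 sb : R) (v : R -> R -> R -> R) : Prop :=
  ricci_flow p_infty v /\
  (forall s theta,
     v 0 (exp (- s + se) * cos theta) (exp (- s + se) * sin theta) + (- s + se)
     = u_cb l_c r_c s0 se s2 sb s) /\
  (forall t, 0 < t -> complete_conformal (v t)) /\
  (forall (T' : R) (w : R -> R -> R -> R), 0 < T' -> ricci_flow (Finite T') w ->
     (forall x y, w 0 x y <= v 0 x y) ->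
     forall t x y, 0 <= t < T' -> w t x y <= v t x y).

From Stdlib Require Import Reals Lra List.
From Coquelicot Require Import Coquelicot.
Open Scope R_scope.

(* For [A = e^(se - sb)] the shrinking round sphere [sphere_flow A] is an explicit
   Ricci flow on [[0,1)] whose conformal factor, in the cylindrical coordinates of
   the cb-surface, is [-log cosh (s - sb) + 1/2 log (2(1-t))].  At [t = 0] it lies
   below [g_cb]: since [u_cb] is C^1 at [s2], its cosine piece touches the sphere
   profile there to first order, and expanding both around [s2] the hyperbolic
   terms dominate the circular ones; the flat and outer pieces then follow by
   monotonicity of [cosh].  Maximal stretchedness of the cb-Ricci flow propagates
   the inequality to all [t < 1]. *)

Lemma cosh_sub_cosh x y :
  cosh x - cosh y = 2 * sinh ((x + y) / 2) * sinh ((x - y) / 2).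
Proof.
  set (a := (x + y) / 2). set (b := (x - y) / 2).
  replace x with (a + b) by (unfold a, b; field).
  replace y with (a + - b) by (unfold a, b; field).
  unfold cosh, sinh.
  replace (- (a + b)) with (- a + - b) by ring.
  replace (- (a + - b)) with (- a + b) by ring.
  rewrite !exp_plus, !exp_Ropp.
  assert (0 < exp a) by apply exp_pos. assert (0 < exp b) by apply exp_pos.
  field; lra.
Qed.

Lemma sinh_nonpos x : x <= 0 -> sinh x <= 0.
Proof.
  intros [Hx | ->].
  - left. rewrite <- sinh_0. apply sinh_lt. exact Hx.
  - rewrite sinh_0. lra.
Qed.

Lemma cosh_ge_1 x : 1 <= cosh x.
Proof.
  pose proof (cosh_sub_cosh x 0) as E. rewrite cosh_0 in E.
  replace ((x + 0) / 2) with ((x - 0) / 2) in E by field.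
  pose proof (Rle_0_sqr (sinh ((x - 0) / 2))). unfold Rsqr in *. lra.
Qed.

Lemma cosh_pos x : 0 < cosh x.
Proof. pose proof (cosh_ge_1 x). lra. Qed.

Lemma cosh_le_nonpos x y : x <= y <= 0 -> cosh y <= cosh x.
Proof.
  intros Hxy. pose proof (cosh_sub_cosh x y) as E.
  pose proof (sinh_nonpos ((x + y) / 2) ltac:(lra)).
  pose proof (sinh_nonpos ((x - y) / 2) ltac:(lra)).
  assert (0 <= - sinh ((x + y) / 2) * - sinh ((x - y) / 2))
    by (apply Rmult_le_pos; lra).
  lra.
Qed.

Lemma sinh_ge_id x : 0 <= x -> x <= sinh x.
Proof.
  intros Hx.
  set (g := fun x => sinh x - x).
  assert (Hg : forall x, derivable_pt_lim g x (cosh x - 1)).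
  { intros y. apply (derivable_pt_lim_minus sinh id).
    - apply derivable_pt_lim_sinh.
    - apply derivable_pt_lim_id. }
  pose (pr := fun y => exist (fun l => derivable_pt_abs g y l) _ (Hg y)).
  assert (Hinc : increasing g).
  { apply (nonneg_derivative_1 g pr). intros y. simpl. pose proof (cosh_ge_1 y). lra. }
  specialize (Hinc 0 x Hx). unfold g in Hinc. rewrite sinh_0 in Hinc. lra.
Qed.

Lemma cosh_minus a b : cosh (a - b) = cosh a * cosh b - sinh a * sinh b.
Proof.
  unfold cosh, sinh. replace (a - b) with (a + - b) by ring.
  replace (- (a + - b)) with (- a + b) by ring.
  rewrite !exp_plus, !exp_Ropp.
  assert (0 < exp a) by apply exp_pos. assert (0 < exp b) by apply exp_pos.
  field; lra.
Qed.

Section AccumulatingZeros.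

Variables (h : R -> R) (x : R).

Hypothesis zeros_cluster :
  forall e, 0 < e -> exists d, d <> 0 /\ Rabs d < e /\ h (x + d) = 0.

Lemma continuity_pt_accumulating_zeros : continuity_pt h x -> h x = 0.
Proof.
  intros Hc. destruct (Req_dec (h x) 0) as [|Hne]; auto. exfalso.
  destruct (Hc (Rabs (h x)) (Rabs_pos_lt _ Hne)) as [a [Ha Hclose]].
  destruct (zeros_cluster a Ha) as [d [Hd0 [Hd Hz]]].
  assert (Hdist : R_dist (h (x + d)) (h x) < Rabs (h x)).
  { apply Hclose. split; [split; [exact I | lra] |].
    simpl. unfold R_dist. replace (x + d - x) with d by ring. exact Hd. }
  unfold R_dist in Hdist. rewrite Hz, Rminus_0_l, Rabs_Ropp in Hdist. lra.
Qed.

Lemma derivable_pt_lim_accumulating_zeros l :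
  derivable_pt_lim h x l -> h x = 0 -> l = 0.
Proof.
  intros Hd Hx. destruct (Req_dec l 0) as [|Hne]; auto. exfalso.
  destruct (Hd (Rabs l) (Rabs_pos_lt _ Hne)) as [a Hquot].
  destruct (zeros_cluster a (cond_pos a)) as [d [Hd0 [Hda Hz]]].
  specialize (Hquot d Hd0 Hda). rewrite Hz, Hx in Hquot.
  replace ((0 - 0) / d - l) with (- l) in Hquot by (field; exact Hd0).
  rewrite Rabs_Ropp in Hquot. lra.
Qed.

End AccumulatingZeros.

Lemma is_derive_neg_ln_cos r s : 0 < r -> 0 < cos (r * s) ->
  is_derive (fun s => - ln (/ r * cos (r * s))) s (r * sin (r * s) / cos (r * s)).
Proof.
  intros Hr Hc. auto_derive.
  - apply Rmult_lt_0_compat; [apply Rinv_0_lt_compat |]; assumption.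
  - field. lra.
Qed.

Lemma is_derive_neg_ln_cosh sb s :
  is_derive (fun s => - ln (cosh (s - sb)) + / 2 * ln 2) s
    (- sinh (s - sb) / cosh (s - sb)).
Proof.
  unfold cosh, sinh. auto_derive; replace (s + - sb) with (s - sb) by ring;
    pose proof (exp_pos (s - sb)); pose proof (exp_pos (- (s - sb))).
  - lra.
  - field. lra.
Qed.

Lemma neg_ln_cosh_div_sqrt2 x : - ln (cosh x) + / 2 * ln 2 = - ln (cosh x / sqrt 2).
Proof.
  assert (Hs : 0 < sqrt 2) by (apply sqrt_lt_R0; lra).
  assert (Hln : ln 2 = 2 * ln (sqrt 2)).
  { rewrite <- (sqrt_sqrt 2) at 1 by lra. rewrite ln_mult by exact Hs. ring. }
  unfold Rdiv. rewrite ln_mult, ln_Rinv, Hln;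
    [field | exact Hs | apply cosh_pos | apply Rinv_0_lt_compat, Hs].
Qed.

Lemma C1_junction (u f g : R -> R) x delta lu lf lg : 0 < delta ->
  (forall d, - delta < d <= 0 -> u (x + d) = f (x + d)) ->
  (forall d, 0 < d < delta -> u (x + d) = g (x + d)) ->
  derivable_pt_lim u x lu -> derivable_pt_lim f x lf -> derivable_pt_lim g x lg ->
  f x = g x /\ lf = lg.
Proof.
  intros Hdelta Hf Hg Hu Hdf Hdg.
  assert (Hleft : forall e, 0 < e -> exists d, d <> 0 /\ Rabs d < e /\
                    u (x + d) - f (x + d) = 0).
  { intros e He. exists (- Rmin e delta / 2).
    pose proof (Rmin_l e delta). pose proof (Rmin_r e delta).
    pose proof (Rmin_pos e delta He Hdelta).
    split; [lra | split; [rewrite Rabs_left; lra |]].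
    rewrite Hf; [ring | lra]. }
  assert (Hright : forall e, 0 < e -> exists d, d <> 0 /\ Rabs d < e /\
                     u (x + d) - g (x + d) = 0).
  { intros e He. exists (Rmin e delta / 2).
    pose proof (Rmin_l e delta). pose proof (Rmin_r e delta).
    pose proof (Rmin_pos e delta He Hdelta).
    split; [lra | split; [rewrite Rabs_pos_eq; lra |]].
    rewrite Hg; [ring | lra]. }
  assert (Hux_f : u x - f x = 0) by (rewrite <- (Rplus_0_r x), Hf; [ring | lra]).
  assert (Hux_g : u x - g x = 0).
  { apply (continuity_pt_accumulating_zeros (fun y => u y - g y) x Hright).
    apply continuity_pt_minus; eapply derivable_continuous_pt; eexists; eassumption. }
  pose proof (derivable_pt_lim_accumulating_zeros _ _ Hleft _
                (derivable_pt_lim_minus _ _ _ _ _ Hu Hdf) Hux_f).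
  pose proof (derivable_pt_lim_accumulating_zeros _ _ Hright _
                (derivable_pt_lim_minus _ _ _ _ _ Hu Hdg) Hux_g).
  split; lra.
Qed.

Lemma cb_matching_at_s2 l r s0 se s2 sb : cb_params l r s0 se s2 sb ->
  / r * cos (r * s2) = cosh (s2 - sb) / sqrt 2 /\
  sin (r * s2) = - sinh (s2 - sb) / sqrt 2.
Proof.
  intros [Hl [[Hr0 Hr1] [[Hs0a Hs0b] [[Hsea Hseb] [[Hs2a Hs2b] [Hsb [Hder _]]]]]]].
  assert (Hlr : - l / r < 0).
  { unfold Rdiv. rewrite Ropp_mult_distr_l_reverse.
    apply Ropp_lt_gt_0_contravar, Rdiv_lt_0_compat; lra. }
  assert (Hcos2 : 0 < cos (r * s2)).
  { assert (r * s2 < r * (PI / (2 * r))) by (apply Rmult_lt_compat_l; lra).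
    replace (r * (PI / (2 * r))) with (PI / 2) in * by (field; lra).
    pose proof (Rmult_lt_0_compat r s2 Hr0 Hs2a). pose proof PI_RGT_0.
    apply cos_gt_0; lra. }
  assert (Hcos_piece : forall d, - s2 < d <= 0 ->
            u_cb l r s0 se s2 sb (s2 + d) = - ln (/ r * cos (r * (s2 + d)))).
  { intros d Hd. unfold u_cb.
    destruct (Rle_dec (s2 + d) s0); [lra |].
    destruct (Rlt_dec (s2 + d) (- l / r)); [lra |].
    destruct (Rle_dec (s2 + d) 0); [lra |].
    destruct (Rle_dec (s2 + d) s2); [reflexivity | lra]. }
  assert (Hcosh_piece : forall d, 0 < d < s2 ->
            u_cb l r s0 se s2 sb (s2 + d) = - ln (cosh (s2 + d - sb)) + / 2 * ln 2).
  { intros d Hd. unfold u_cb.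
    destruct (Rle_dec (s2 + d) s0); [lra |].
    destruct (Rlt_dec (s2 + d) (- l / r)); [lra |].
    destruct (Rle_dec (s2 + d) 0); [lra |].
    destruct (Rle_dec (s2 + d) s2); [lra | reflexivity]. }
  destruct (Hder s2) as [du Hdu]. apply is_derive_Reals in Hdu.
  pose proof (is_derive_neg_ln_cos r s2 Hr0 Hcos2) as Hdcos.
  pose proof (is_derive_neg_ln_cosh sb s2) as Hdcosh.
  apply is_derive_Reals in Hdcos, Hdcosh.
  destruct (C1_junction _ _ _ s2 s2 _ _ _ Hs2a Hcos_piece Hcosh_piece Hdu Hdcos Hdcosh)
    as [Hvalue Hslope].
  assert (Hs : 0 < sqrt 2) by (apply sqrt_lt_R0; lra).
  pose proof (cosh_pos (s2 - sb)).
  assert (HC : / r * cos (r * s2) = cosh (s2 - sb) / sqrt 2).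
  { apply ln_inv.
    - apply Rmult_lt_0_compat; [apply Rinv_0_lt_compat |]; assumption.
    - apply Rdiv_lt_0_compat; assumption.
    - rewrite neg_ln_cosh_div_sqrt2 in Hvalue. lra. }
  split; [exact HC |].
  replace (sin (r * s2)) with ((r * sin (r * s2) / cos (r * s2)) * (/ r * cos (r * s2)))
    by (field; lra).
  rewrite Hslope, HC. field. lra.
Qed.

Lemma cos_profile_le_cosh_profile r s2 sb s : 0 < r -> s2 < sb ->
  / r * cos (r * s2) = cosh (s2 - sb) / sqrt 2 ->
  sin (r * s2) = - sinh (s2 - sb) / sqrt 2 ->
  s <= s2 -> / r * cos (r * s) <= cosh (s - sb) / sqrt 2.
Proof.
  intros Hr Hsb HC HS Hs.
  set (d := s2 - s).
  assert (Hd : 0 <= d) by (unfold d; lra).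
  replace (r * s) with (r * s2 - r * d) by (unfold d; ring).
  replace (s - sb) with ((s2 - sb) - d) by (unfold d; ring).
  rewrite cos_minus, cosh_minus. clearbody d.
  assert (Hsqrt : 0 < sqrt 2) by (apply sqrt_lt_R0; lra).
  assert (HC0 : 0 <= / r * cos (r * s2))
    by (rewrite HC; apply Rlt_le, Rdiv_lt_0_compat; [apply cosh_pos | exact Hsqrt]).
  assert (HS0 : 0 <= sin (r * s2)).
  { rewrite HS. unfold Rdiv. apply Rmult_le_pos; [| left; apply Rinv_0_lt_compat, Hsqrt].
    pose proof (sinh_nonpos (s2 - sb) ltac:(lra)). lra. }
  (* Expanding at [s2]: both sides are [C * even part + S * odd part] with the same
     coefficients, and the hyperbolic parts dominate the circular ones. *)
  replace (/ r * (cos (r * s2) * cos (r * d) + sin (r * s2) * sin (r * d)))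
    with (/ r * cos (r * s2) * cos (r * d) + sin (r * s2) * (sin (r * d) / r))
    by (field; lra).
  replace ((cosh (s2 - sb) * cosh d - sinh (s2 - sb) * sinh d) / sqrt 2)
    with (/ r * cos (r * s2) * cosh d + sin (r * s2) * sinh d)
    by (rewrite HC, HS; field; lra).
  assert (Hcos : cos (r * d) <= cosh d)
    by (pose proof (COS_bound (r * d)); pose proof (cosh_ge_1 d); lra).
  assert (Hsin : sin (r * d) / r <= sinh d).
  { apply Rle_trans with d; [| exact (sinh_ge_id d Hd)].
    apply (Rmult_le_reg_l r); [exact Hr |].
    replace (r * (sin (r * d) / r)) with (sin (r * d)) by (field; lra).
    destruct Hd as [Hd | <-].
    - left. apply sin_lt_x. apply Rmult_lt_0_compat; lra.
    - rewrite Rmult_0_r, sin_0. lra. }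
  apply Rplus_le_compat; apply Rmult_le_compat_l; assumption.
Qed.

Lemma inv_le_cosh_profile l r s0 se s2 sb : cb_params l r s0 se s2 sb ->
  forall s, s <= 0 -> / r <= cosh (s - sb) / sqrt 2.
Proof.
  intros Hp s Hs. destruct (cb_matching_at_s2 _ _ _ _ _ _ Hp) as [HC HS].
  destruct Hp as [_ [[Hr0 _] [_ [_ [[Hs2a _] [Hsb _]]]]]].
  pose proof (cos_profile_le_cosh_profile r s2 sb 0 Hr0 Hsb HC HS ltac:(lra)) as H0.
  rewrite Rmult_0_r, cos_0, Rmult_1_r in H0.
  eapply Rle_trans; [exact H0 |]. unfold Rdiv.
  apply Rmult_le_compat_r; [left; apply Rinv_0_lt_compat, sqrt_lt_R0; lra |].
  apply cosh_le_nonpos. lra.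
Qed.

Lemma u_cb_ge_sphere_profile l r s0 se s2 sb : cb_params l r s0 se s2 sb ->
  forall s, - ln (cosh (s - sb)) + / 2 * ln 2 <= u_cb l r s0 se s2 sb s.
Proof.
  intros Hp s. destruct (cb_matching_at_s2 _ _ _ _ _ _ Hp) as [HC HS].
  pose proof (inv_le_cosh_profile _ _ _ _ _ _ Hp) as Hflat.
  destruct Hp as [Hl [[Hr0 Hr1] [[Hs0a Hs0b] [[Hsea Hseb] [[Hs2a Hs2b] [Hsb _]]]]]].
  assert (Hlr : - l / r < 0).
  { unfold Rdiv. rewrite Ropp_mult_distr_l_reverse.
    apply Ropp_lt_gt_0_contravar, Rdiv_lt_0_compat; lra. }
  assert (Hrinv : 1 < / r) by (rewrite <- Rinv_1; apply Rinv_lt_contravar; lra).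
  assert (Hneg_ln : forall X, 0 < X -> X <= cosh (s - sb) / sqrt 2 ->
                      - ln (cosh (s - sb) / sqrt 2) <= - ln X).
  { intros X HX HXc. apply Ropp_le_contravar, ln_le; assumption. }
  rewrite neg_ln_cosh_div_sqrt2. unfold u_cb.
  destruct (Rle_dec s s0).
  { replace (- s + se) with (- ln (exp (s - se))) by (rewrite ln_exp; ring).
    apply Hneg_ln; [apply exp_pos |].
    assert (exp (s - se) < 1) by (rewrite <- exp_0; apply exp_increasing; lra).
    pose proof (Hflat s ltac:(lra)). lra. }
  destruct (Rlt_dec s (- l / r)).
  { assert (Hcos : 0 < cos (r * s + l)).
    { assert (r * (- (l + PI / 2) / r) < r * s) by (apply Rmult_lt_compat_l; lra).
      assert (r * s < r * (- l / r)) by (apply Rmult_lt_compat_l; lra).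
      replace (r * (- (l + PI / 2) / r)) with (- (l + PI / 2)) in * by (field; lra).
      replace (r * (- l / r)) with (- l) in * by (field; lra).
      apply cos_gt_0; lra. }
    apply Hneg_ln; [apply Rmult_lt_0_compat; [apply Rinv_0_lt_compat |]; assumption |].
    assert (/ r * cos (r * s + l) <= / r * 1).
    { apply Rmult_le_compat_l; [left; apply Rinv_0_lt_compat; exact Hr0 |].
      apply COS_bound. }
    pose proof (Hflat s ltac:(lra)). lra. }
  destruct (Rle_dec s 0).
  { replace (ln r) with (- ln (/ r)) by (rewrite ln_Rinv by exact Hr0; ring).
    apply Hneg_ln; [apply Rinv_0_lt_compat, Hr0 | apply Hflat; assumption]. }
  destruct (Rle_dec s s2).
  { assert (Hcos : 0 < cos (r * s)).
    { assert (0 < r * s) by (apply Rmult_lt_0_compat; lra).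
      assert (r * s <= r * s2) by (apply Rmult_le_compat_l; lra).
      assert (r * s2 < r * (PI / (2 * r))) by (apply Rmult_lt_compat_l; lra).
      replace (r * (PI / (2 * r))) with (PI / 2) in * by (field; lra).
      apply cos_gt_0; lra. }
    apply Hneg_ln; [apply Rmult_lt_0_compat; [apply Rinv_0_lt_compat |]; assumption |].
    apply cos_profile_le_cosh_profile with s2; assumption. }
  rewrite <- neg_ln_cosh_div_sqrt2. lra.
Qed.

(* Elementary expressions in [(t, x, y)], with formal partial derivatives, give
   smooth functions wherever divisions and logarithms are defined. *)
Inductive expr : Type :=
| ECst (c : R) | EVt | EVx | EVy
| EAdd (a b : expr) | EMul (a b : expr) | EInv (a : expr) | ELn (a : expr).

Fixpoint eval (e : expr) (t x y : R) : R :=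
  match e with
  | ECst c => c
  | EVt => t
  | EVx => x
  | EVy => y
  | EAdd a b => eval a t x y + eval b t x y
  | EMul a b => eval a t x y * eval b t x y
  | EInv a => / eval a t x y
  | ELn a => ln (eval a t x y)
  end.

Fixpoint dexpr (i : nat) (e : expr) : expr :=
  match e with
  | ECst _ => ECst 0
  | EVt => match i with O => ECst 1 | _ => ECst 0 end
  | EVx => match i with 1%nat => ECst 1 | _ => ECst 0 end
  | EVy => match i with O | 1%nat => ECst 0 | _ => ECst 1 end
  | EAdd a b => EAdd (dexpr i a) (dexpr i b)
  | EMul a b => EAdd (EMul (dexpr i a) b) (EMul a (dexpr i b))
  | EInv a => EMul (ECst (-1)) (EMul (dexpr i a) (EMul (EInv a) (EInv a)))
  | ELn a => EMul (dexpr i a) (EInv a)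
  end.

Definition iter_dexpr (l : list nat) (e : expr) : expr := fold_right dexpr e l.

Definition line (i : nat) (f : R -> R -> R -> R) (t x y : R) : R -> R :=
  match i with
  | O => fun z => f z x y
  | 1%nat => fun z => f t z y
  | _ => fun z => f t x z
  end.

Definition coord (i : nat) (t x y : R) : R :=
  match i with O => t | 1%nat => x | _ => y end.

Lemma pd_line i f t x y : pd i f t x y = Derive (line i f t x y) (coord i t x y).
Proof. destruct i as [| [| i]]; reflexivity. Qed.

Lemma ex_pd_line i f t x y : ex_pd i f t x y = ex_derive (line i f t x y) (coord i t x y).
Proof. destruct i as [| [| i]]; reflexivity. Qed.

Lemma line_coord i f t x y : line i f t x y (coord i t x y) = f t x y.
Proof. destruct i as [| [| i]]; reflexivity. Qed.

Definition uncurry3 (f : R -> R -> R -> R) (p : R * R * R) : R :=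
  f (fst (fst p)) (snd (fst p)) (snd p).

Lemma cont_in_full_continuous f t x y :
  continuous (uncurry3 f) ((t, x), y) -> cont_in full f t x y.
Proof.
  intros Hc eps Heps.
  destruct (proj1 (filterlim_locally _ _) Hc (mkposreal eps Heps)) as [d Hd].
  exists d. split; [apply cond_pos |].
  intros t' x' y' _ Ht Hx Hy. apply (Hd ((t', x'), y')). repeat split; assumption.
Qed.

Section TimeHalfSpace.

Variable T : R.

Fixpoint defined_before (e : expr) : Prop :=
  match e with
  | EAdd a b | EMul a b => defined_before a /\ defined_before b
  | EInv a => defined_before a /\ forall t x y, t < T -> eval a t x y <> 0
  | ELn a => defined_before a /\ forall t x y, t < T -> 0 < eval a t x y
  | _ => True
  end.

Lemma defined_before_dexpr i e : defined_before e -> defined_before (dexpr i e).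
Proof.
  induction e; simpl; intros He; try (destruct i as [| [| i]]; simpl; tauto); try tauto.
  destruct He as [Ha Hpos]. repeat split; auto.
    intros t x y Ht. specialize (Hpos t x y Ht). lra.
Qed.

Lemma defined_before_iter_dexpr l e : defined_before e -> defined_before (iter_dexpr l e).
Proof. induction l; simpl; auto using defined_before_dexpr. Qed.

Lemma is_derive_eval i e t x y : defined_before e -> t < T ->
  is_derive (line i (eval e) t x y) (coord i t x y) (eval (dexpr i e) t x y).
Proof.
  intros He Ht. induction e; simpl in He |- *.
  - destruct i as [| [| i]]; apply (is_derive_const c).
  - destruct i as [| [| i]]; [apply (is_derive_id t) | apply (is_derive_const t) ..].
  - destruct i as [| [| i]];
      [apply (is_derive_const x) | apply (is_derive_id x) | apply (is_derive_const x)].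
  - destruct i as [| [| i]];
      [apply (is_derive_const y) | apply (is_derive_const y) | apply (is_derive_id y)].
  - destruct He as [Ha Hb].
    apply (is_derive_ext (fun z => line i (eval e1) t x y z + line i (eval e2) t x y z));
      [intros z; destruct i as [| [| i]]; reflexivity |].
    apply (is_derive_plus (line i (eval e1) t x y) (line i (eval e2) t x y)); auto.
  - destruct He as [Ha Hb].
    apply (is_derive_ext (fun z => line i (eval e1) t x y z * line i (eval e2) t x y z));
      [intros z; destruct i as [| [| i]]; reflexivity |].
    replace (eval (dexpr i e1) t x y * eval e2 t x y + eval e1 t x y * eval (dexpr i e2) t x y)
      with (eval (dexpr i e1) t x y * line i (eval e2) t x y (coord i t x y)
            + line i (eval e1) t x y (coord i t x y) * eval (dexpr i e2) t x y)
      by (rewrite !line_coord; reflexivity).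
    apply (is_derive_mult (line i (eval e1) t x y) (line i (eval e2) t x y)); auto.
    intros; apply Rmult_comm.
  - destruct He as [Ha Hnz]. specialize (Hnz t x y Ht).
    apply (is_derive_ext (fun z => / line i (eval e) t x y z));
      [intros z; destruct i as [| [| i]]; reflexivity |].
    replace (-1 * (eval (dexpr i e) t x y * (/ eval e t x y * / eval e t x y)))
      with (- eval (dexpr i e) t x y / (line i (eval e) t x y (coord i t x y)) ^ 2)
      by (rewrite line_coord; field; exact Hnz).
    apply (is_derive_inv (line i (eval e) t x y)); auto.
    rewrite line_coord. exact Hnz.
  - destruct He as [Ha Hpos]. specialize (Hpos t x y Ht).
    apply (is_derive_ext (fun z => ln (line i (eval e) t x y z)));
      [intros z; destruct i as [| [| i]]; reflexivity |].
    apply (is_derive_comp ln (line i (eval e) t x y)); auto.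
    rewrite line_coord. apply is_derive_ln, Hpos.
Qed.

Lemma continuous_eval e t x y : defined_before e -> t < T ->
  continuous (uncurry3 (eval e)) ((t, x), y).
Proof.
  intros He Ht. unfold uncurry3. induction e; simpl in He |- *.
  - apply continuous_const.
  - apply (continuous_comp fst fst); [apply continuous_fst | apply continuous_fst].
  - apply (continuous_comp fst snd); [apply continuous_fst | apply continuous_snd].
  - apply continuous_snd.
  - destruct He. apply (continuous_plus (uncurry3 (eval e1)) (uncurry3 (eval e2))); auto.
  - destruct He. apply (continuous_mult (uncurry3 (eval e1)) (uncurry3 (eval e2))); auto.
  - destruct He as [Ha Hnz].
    apply (continuous_comp (uncurry3 (eval e)) Rinv); auto.
    apply continuous_Rinv, Hnz, Ht.
  - destruct He as [Ha Hpos].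
    apply (continuous_comp (uncurry3 (eval e)) ln); auto.
    apply continuous_ln, Hpos, Ht.
Qed.

Lemma locally_line_eq i (f g : R -> R -> R -> R) t x y : t < T ->
  (forall t x y, t < T -> f t x y = g t x y) ->
  locally (coord i t x y) (fun z => line i f t x y z = line i g t x y z).
Proof.
  intros Ht Hfg. destruct i as [| [| i]]; simpl.
  - assert (Hgap : 0 < T - t) by lra.
    exists (mkposreal _ Hgap). intros z Hz. apply Hfg.
    change (Rabs (z - t) < T - t) in Hz. apply Rabs_def2 in Hz. lra.
  - apply filter_forall. intros. apply Hfg, Ht.
  - apply filter_forall. intros. apply Hfg, Ht.
Qed.

Lemma iter_pd_eval l e t x y : defined_before e -> t < T ->
  iter_pd l (eval e) t x y = eval (iter_dexpr l e) t x y.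
Proof.
  intros He. revert t x y. induction l as [| i l IH]; intros t x y Ht; [reflexivity |].
  simpl. rewrite pd_line, (Derive_ext_loc _ (line i (eval (iter_dexpr l e)) t x y)).
  - apply is_derive_unique, is_derive_eval; [apply defined_before_iter_dexpr |]; assumption.
  - apply locally_line_eq; assumption.
Qed.

Lemma cont_in_full_ext (f g : R -> R -> R -> R) t x y : t < T ->
  (forall t x y, t < T -> f t x y = g t x y) ->
  cont_in full f t x y -> cont_in full g t x y.
Proof.
  intros Ht Hfg Hc eps Heps. destruct (Hc eps Heps) as [d [Hd Hclose]].
  exists (Rmin d (T - t)). split; [apply Rmin_pos; lra |].
  intros t' x' y' _ H1 H2 H3.
  pose proof (Rmin_l d (T - t)). pose proof (Rmin_r d (T - t)).
  apply Rabs_def2 in H1 as H1'.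
  rewrite <- (Hfg t' x' y'), <- (Hfg t x y) by lra.
  apply Hclose; [exact I | lra ..].
Qed.

Lemma smooth_on_eval e : defined_before e -> smooth_on (open_slab (Finite T)) (eval e).
Proof.
  intros He l t x y [_ Ht]. simpl in Ht.
  assert (Hagree : forall t x y, t < T -> eval (iter_dexpr l e) t x y = iter_pd l (eval e) t x y)
    by (intros; symmetry; apply iter_pd_eval; assumption).
  split.
  - intros i. rewrite ex_pd_line.
    apply (ex_derive_ext_loc (line i (eval (iter_dexpr l e)) t x y)).
    + apply locally_line_eq; assumption.
    + eexists. apply is_derive_eval; [apply defined_before_iter_dexpr |]; assumption.
  - apply (cont_in_full_ext (eval (iter_dexpr l e))); [assumption .. |].
    apply cont_in_full_continuous, continuous_eval;
      [apply defined_before_iter_dexpr |]; assumption.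
Qed.

End TimeHalfSpace.

(* [e^(2w) |dz|^2 = 2(1-t) (2A / (A^2 + |z|^2))^2 |dz|^2] is the round sphere of
   radius [sqrt (2(1-t))], which shrinks to a point at [t = 1]. *)
Definition sphere_flow (A : R) : expr :=
  EAdd (EMul (ECst (/ 2)) (ELn (EMul (ECst 2) (EAdd (ECst 1) (EMul (ECst (-1)) EVt)))))
       (EAdd (ECst (ln (2 * A)))
             (EMul (ECst (-1)) (ELn (EAdd (ECst (A * A)) (EAdd (EMul EVx EVx) (EMul EVy EVy)))))).

Lemma defined_before_sphere_flow A : 0 < A -> defined_before 1 (sphere_flow A).
Proof. intros HA. simpl. repeat split; intros t x y Ht; nra. Qed.

Lemma exp_sphere_flow A t x y : 0 < A -> t < 1 ->
  exp (- 2 * eval (sphere_flow A) t x y) =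
  (A * A + (x * x + y * y)) * (A * A + (x * x + y * y)) / (2 * (1 + -1 * t) * (2 * A) * (2 * A)).
Proof.
  intros HA Ht. simpl.
  set (P := 2 * (1 + -1 * t)). set (B := 2 * A). set (Q := A * A + (x * x + y * y)).
  assert (HP : 0 < P) by (unfold P; lra). assert (HB : 0 < B) by (unfold B; lra).
  assert (HQ : 0 < Q) by (unfold Q; nra).
  replace (-2 * (/ 2 * ln P + (ln B + -1 * ln Q)))
    with (- ln P + (- ln B + (- ln B + (ln Q + ln Q)))) by field.
  rewrite !exp_plus, !exp_Ropp, !exp_ln by assumption.
  field. split; lra.
Qed.

Lemma ricci_flow_sphere_flow A : 0 < A -> ricci_flow (Finite 1) (eval (sphere_flow A)).
Proof.
  intros HA. pose proof (defined_before_sphere_flow A HA) as He.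
  split; [| split].
  - apply smooth_on_eval, He.
  - intros t x y [_ Ht]. simpl in Ht.
    change (iter_pd (0 :: nil)%nat (eval (sphere_flow A)) t x y =
      exp (-2 * eval (sphere_flow A) t x y) *
      (iter_pd (1 :: 1 :: nil)%nat (eval (sphere_flow A)) t x y
       + iter_pd (2 :: 2 :: nil)%nat (eval (sphere_flow A)) t x y)).
    rewrite !(iter_pd_eval 1), exp_sphere_flow by assumption.
    simpl. assert (0 < A * A + (x * x + y * y)) by nra.
    field. repeat split; lra.
  - intros t x y [_ Ht] eps Heps. simpl in Ht.
    destruct (cont_in_full_continuous _ _ _ _ (continuous_eval 1 _ t x y He Ht) eps Heps)
      as [d [Hd Hclose]].
    exists d. split; [exact Hd |]. intros. apply Hclose; [exact I | assumption ..].
Qed.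

Lemma sphere_flow_polar se sb t s theta : t < 1 ->
  eval (sphere_flow (exp (se - sb))) t (exp (- s + se) * cos theta) (exp (- s + se) * sin theta)
    + (- s + se)
  = - ln (cosh (s - sb)) + / 2 * ln (2 * (1 - t)).
Proof.
  intros Ht. simpl.
  set (A := exp (se - sb)). set (r := exp (- s + se)).
  assert (HA : 0 < A) by apply exp_pos. assert (Hr : 0 < r) by apply exp_pos.
  assert (Hq : r * cos theta * (r * cos theta) + r * sin theta * (r * sin theta) = r * r).
  { pose proof (sin2_cos2 theta). unfold Rsqr in *. nra. }
  rewrite Hq. replace (1 + -1 * t) with (1 - t) by ring.
  assert (Hc : cosh (s - sb) = (A * A + r * r) / (2 * A * r)).
  { assert (E : exp (s - sb) = A / r).
    { unfold A, r. replace (se - sb) with ((s - sb) + (- s + se)) by ring.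
      rewrite exp_plus. field. apply Rgt_not_eq, exp_pos. }
    unfold cosh. rewrite exp_Ropp, E. field. split; lra. }
  rewrite Hc, ln_div, (ln_mult (2 * A) r) by nra.
  unfold r. rewrite ln_exp. ring.
Qed.

Lemma polar_coordinates x y se : x <> 0 \/ y <> 0 -> exists s theta,
  x = exp (- s + se) * cos theta /\ y = exp (- s + se) * sin theta.
Proof.
  intros Hxy.
  set (rho := sqrt (x * x + y * y)).
  assert (Hp : 0 < x * x + y * y) by (destruct Hxy; nra).
  assert (Hrho : 0 < rho) by (apply sqrt_lt_R0, Hp).
  assert (Hrr : rho * rho = x * x + y * y) by (apply sqrt_sqrt; lra).
  exists (se - ln rho).
  replace (- (se - ln rho) + se) with (ln rho) by ring. rewrite exp_ln by exact Hrho.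
  assert (Hsq : forall a, a / rho * (a / rho) = a * a / (x * x + y * y))
    by (intros a; rewrite <- Hrr; field; lra).
  assert (Hb : -1 <= x / rho <= 1).
  { assert (x / rho * (x / rho) <= 1).
    { rewrite Hsq. apply (Rmult_le_reg_r (x * x + y * y)); [exact Hp |].
      replace (x * x / (x * x + y * y) * (x * x + y * y)) with (x * x) by (field; lra). nra. }
    nra. }
  assert (Hs : sqrt (1 - (x / rho)²) = Rabs (y / rho)).
  { rewrite <- sqrt_Rsqr_abs. f_equal. unfold Rsqr. rewrite !Hsq. field. lra. }
  destruct (Rle_dec 0 y).
  - exists (acos (x / rho)). rewrite cos_acos, sin_acos, Hs by exact Hb.
    rewrite Rabs_pos_eq by (apply Rdiv_le_0_compat; lra). split; field; lra.
  - exists (- acos (x / rho)). rewrite cos_neg, sin_neg, cos_acos, sin_acos, Hs by exact Hb.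
    assert (0 < / rho) by (apply Rinv_0_lt_compat, Hrho).
    rewrite Rabs_left by (unfold Rdiv; nra).
    split; field; lra.
Qed.

Lemma le_of_le_punctured (f g : R -> R) x :
  continuity_pt f x -> continuity_pt g x -> (forall y, y <> x -> f y <= g y) -> f x <= g x.
Proof.
  intros Hf Hg Hfg.
  apply (is_lim_le_loc f g x (f x) (g x));
    [| apply is_lim_continuity, Hf | apply is_lim_continuity, Hg].
  exists (mkposreal 1 Rlt_0_1). intros y _ Hy. apply Hfg, Hy.
Qed.

Lemma cont_in_continuity_pt_x D f t x y :
  (forall x', D t x' y) -> cont_in D f t x y -> continuity_pt (fun a => f t a y) x.
Proof.
  intros HD Hc eps Heps. destruct (Hc eps Heps) as [d [Hd Hclose]].
  exists d. split; [exact Hd |]. intros x' [_ Hx']. simpl in *. unfold R_dist in *.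
  apply Hclose; [apply HD | | exact Hx' |]; rewrite Rminus_diag, Rabs_R0; exact Hd.
Qed.

Lemma sphere_flow_le_cb_initial l r s0 se s2 sb (v : R -> R -> R -> R) :
  cb_params l r s0 se s2 sb ->
  (forall s theta,
     v 0 (exp (- s + se) * cos theta) (exp (- s + se) * sin theta) + (- s + se)
     = u_cb l r s0 se s2 sb s) ->
  cont_in (closed_slab p_infty) v 0 0 0 ->
  forall x y, eval (sphere_flow (exp (se - sb))) 0 x y <= v 0 x y.
Proof.
  intros Hp Hinit Hcont.
  set (A := exp (se - sb)).
  assert (Hoff : forall x y, x <> 0 \/ y <> 0 -> eval (sphere_flow A) 0 x y <= v 0 x y).
  { intros x y Hxy. destruct (polar_coordinates x y se Hxy) as [s [theta [-> ->]]].
    pose proof (sphere_flow_polar se sb 0 s theta ltac:(lra)) as Hw.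
    pose proof (Hinit s theta).
    pose proof (u_cb_ge_sphere_profile _ _ _ _ _ _ Hp s).
    replace (2 * (1 - 0)) with 2 in Hw by ring. fold A in Hw. lra. }
  intros x y.
  destruct (Req_dec x 0) as [-> | Hx]; [| apply Hoff; tauto].
  destruct (Req_dec y 0) as [-> | Hy]; [| apply Hoff; tauto].
  (* The origin has no polar coordinates: pass to the limit along the x-axis. *)
  apply (le_of_le_punctured (fun a => eval (sphere_flow A) 0 a 0) (fun a => v 0 a 0)).
  - apply (cont_in_continuity_pt_x full); [intros; exact I |].
    apply cont_in_full_continuous, (continuous_eval 1);
      [apply defined_before_sphere_flow, exp_pos | lra].
  - apply (cont_in_continuity_pt_x (closed_slab p_infty)); [| exact Hcont].
    intros. split; [lra | exact I].
  - intros a Ha. apply Hoff. left. exact Ha.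
Qed.

Theorem lemma5p1 :
  forall (l_c r_c s0 se s2 sb : R) (v : R -> R -> R -> R),
    1 < l_c ->
    cb_params l_c r_c s0 se s2 sb ->
    cb_ricci_flow l_c r_c s0 se s2 sb v ->
    forall t s theta, 0 <= t < 1 ->
      v t (exp (- s + se) * cos theta) (exp (- s + se) * sin theta) + (- s + se)
      >= - ln (cosh (s - sb)) + / 2 * ln (2 * (1 - t)).
Proof.
  intros l r s0 se s2 sb v _ Hp [[_ [_ Hcont]] [Hinit [_ Hmax]]] t s theta Ht.
  pose proof (sphere_flow_le_cb_initial _ _ _ _ _ _ v Hp Hinit
                (Hcont 0 0 0 (conj (Rle_refl 0) I))) as Hle0.
  pose proof (Hmax 1 _ Rlt_0_1 (ricci_flow_sphere_flow _ (exp_pos (se - sb))) Hle0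
                t (exp (- s + se) * cos theta) (exp (- s + se) * sin theta) Ht) as Hle.
  pose proof (sphere_flow_polar se sb t s theta ltac:(lra)).
  lra.
Qed.
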